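(* There is a positive existential formula $\varphi(x,y)$ in the language $\mathcal{L}_z=\{0,1,+,\cdot,z\}$ such that for every field $F$, in the ring $F[z]$ (with $0,1,+,\cdot$ interpreted as usual and the constant symbol $z$ interpreted as the variable $z$) and for all $x,y\in F[z]$, $F[z]$ satisfies $\varphi(x,y)$ if and only if $x\neq y$. That is, the relation $\neq$ is uniformly positive existentially $\mathcal{L}_z$-definable in the class of all polynomial rings in one variable over fields.
   Context: A relation is uniformly positive existentially $\mathcal{L}$-definable in a class of $\mathcal{L}$-structures if a single positive existential $\mathcal{L}$-formula defines it in every structure of the class. *)

From HB Require Import structures.
From mathcomp Require Import all_boot all_order all_algebra.
Set Implicit Arguments. Unset Strict Implicit. Unset Printing Implicit Defensive.
Import GRing.Theory.
Local Open Scope ring_scope.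

Inductive lz_term : Type :=
  | TVar of nat
  | TZero
  | TOne
  | TZ
  | TAdd of lz_term & lz_term
  | TMul of lz_term & lz_term.

Inductive pe_form : Type :=
  | PEq of lz_term & lz_term
  | PAnd of pe_form & pe_form
  | POr of pe_form & pe_form
  | PEx of nat & pe_form.

Fixpoint eval_term (R : pzRingType) (zz : R) (e : nat -> R) (t : lz_term) : R :=
  match t with
  | TVar n => e n
  | TZero => 0
  | TOne => 1
  | TZ => zz
  | TAdd t1 t2 => eval_term zz e t1 + eval_term zz e t2
  | TMul t1 t2 => eval_term zz e t1 * eval_term zz e t2
  end.

Definition upd (R : Type) (e : nat -> R) (n : nat) (a : R) : nat -> R :=
  fun m => if m == n then a else e m.

Fixpoint holds (R : pzRingType) (zz : R) (e : nat -> R) (f : pe_form) : Prop :=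
  match f with
  | PEq t1 t2 => eval_term zz e t1 = eval_term zz e t2
  | PAnd f1 f2 => holds zz e f1 /\ holds zz e f2
  | POr f1 f2 => holds zz e f1 \/ holds zz e f2
  | PEx n f1 => exists a : R, holds zz (upd e n a) f1
  end.

(* Over a field, x <> y iff x - y is coprime to some polynomial t^2 + z, i.e.
   iff (x - y) a + (t^2 + z) b = 1 has a solution, which is positive existential.
   If x = y this would make t^2 + z a unit, impossible as its degree is
   positive. Conversely write x - y = q z^m with q(0) <> 0 and choose t with
   t = 0 mod q and t = 1 mod z (Bezout); then t^2 + z = z mod q and
   t^2 + z = 1 mod z, so t^2 + z is coprime to q and to z. *)
From mathcomp Require Import all_boot all_order all_algebra.

Set Implicit Arguments.
Unset Strict Implicit.
Unset Printing Implicit Defensive.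

Import GRing.Theory.
Local Open Scope ring_scope.

Section SquarePlusX.

Variable R : idomainType.
Implicit Types t : {poly R}.

Lemma size_sqr_addX_gt1 t : (1 < size (t * t + 'X)%R)%N.
Proof.
have [-> | t_neq0] := eqVneq t 0; first by rewrite mul0r add0r size_polyX.
have size_tt : size (t * t) = (size t + size t).-1 by rewrite size_mul.
have [tt_small | tt_large] := ltnP (size (t * t)) 2.
  by rewrite addrC size_polyDl size_polyX.
have tt_neq2 : size (t * t) != 2%N.
  by rewrite size_tt; case: (size t) => [|[|n]] //; rewrite addSn !addnS.
by rewrite size_polyDl ?size_polyX // ltn_neqAle eq_sym tt_neq2.
Qed.

Lemma sqr_addX_neqp1 t : ~~ (t * t + 'X %= 1).
Proof. by rewrite -size_poly_eq1 neq_ltn size_sqr_addX_gt1 orbT. Qed.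

End SquarePlusX.

Lemma coprimep_sqr_addX (F : fieldType) (d : {poly F}) :
  d != 0 -> exists t, coprimep d (t * t + 'X).
Proof.
move=> d_neq0.
have [m [q q0_neq0 def_d]] := multiplicity_XsubC d 0.
rewrite d_neq0 /= in q0_neq0; rewrite polyC0 subr0 in def_d.
have /Bezout_eq1_coprimepP [[u v] /= bezout] : coprimep q 'X by rewrite coprimepX.
exists (u * q).
have t_mod_X : u * q = 1 - v * 'X by rewrite -bezout addrK.
rewrite def_d coprimepMl; apply/andP; split.
  have -> : u * q * (u * q) = u * q * u * q by rewrite !mulrA.
  by rewrite coprimep_addl_mul coprimepX.
apply: coprimep_expl; rewrite coprimep_sym coprimepX /root.
by rewrite t_mod_X !hornerE !(mulr0, subr0, addr0, mulr1) oner_eq0.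
Qed.

(* x = variable 0, y = variable 1; the witnesses t, a, b are variables 2, 3, 4,
   and the equation x a + (t t + z) b = y a + 1 avoids subtraction. *)
Definition neq_form : pe_form :=
  PEx 2 (PEx 3 (PEx 4
    (PEq (TAdd (TMul (TVar 0) (TVar 3))
               (TMul (TAdd (TMul (TVar 2) (TVar 2)) TZ) (TVar 4)))
         (TAdd (TMul (TVar 1) (TVar 3)) TOne)))).

Lemma holds_neq_form (F : fieldType) (e : nat -> {poly F}) :
  holds ('X : {poly F}) e neq_form <->
  exists t, coprimep (e 0%N - e 1%N) (t * t + 'X).
Proof.
have subtract_ya (a c : {poly F}) :
    e 0%N * a + c = e 1%N * a + 1 <-> a * (e 0%N - e 1%N) + c = 1.
  rewrite [a * _]mulrC mulrBl addrAC.
  split=> [-> | <-]; first by rewrite addrAC subrr add0r.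
  by rewrite [RHS]addrC subrK.
split=> [[t [a [b /subtract_ya bezout]]] | [t /Bezout_eq1_coprimepP [[a b] /= bezout]]].
  by exists t; apply/Bezout_eq1_coprimepP; exists (a, b); rewrite /= (mulrC b).
by exists t, a, b; apply/subtract_ya; rewrite -bezout (mulrC b).
Qed.

Theorem lemma1p3 :
  exists phi : pe_form,
    forall (F : fieldType) (x y : {poly F}) (e : nat -> {poly F}),
      e 0%N = x -> e 1%N = y ->
      (holds ('X : {poly F}) e phi <-> x <> y).
Proof.
exists neq_form => F x y e e0 e1.
apply: iff_trans (holds_neq_form e) _; rewrite e0 e1; split.
  move=> [t coprime_t] eq_xy.
  by move: coprime_t; rewrite eq_xy subrr coprime0p (negPf (sqr_addX_neqp1 t)).
by move=> /eqP; rewrite -subr_eq0 => /coprimep_sqr_addX.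
Qed.
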